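(* Let $L\ge 4$ be even, and let $G=(V,E)$ be the $L\times L$ toroidal grid graph, which is bipartite. Let $A$ be one of its two color classes. Let $D\subseteq V$ be a set of even cardinality with $A\subseteq D$. Then $G$ has a $D$-join of size exactly $L^2/2$.
   Context: The $L\times L$ toroidal grid graph $G=(V,E)$ has vertex set $V=\mathbb{Z}_L\times\mathbb{Z}_L$. Its edges are $\{(i,j),(i+1,j)\}$ and $\{(i,j),(i,j+1)\}$ for all $(i,j)$, with indices mod $L$. For even $L$ its two color classes are $\{(i,j): i+j \text{ even}\}$ and $\{(i,j): i+j\text{ odd}\}$. For a set $J\subseteq E$, the $J$-degree of a vertex $v$ is the number of edges of $J$ incident to $v$. For $D\subseteq V$ of even size, a $D$-join is a set $J\subseteq E$ such that every vertex of $D$ has odd $J$-degree and every vertex of $V\setminus D$ has even $J$-degree. *)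

From mathcomp Require Import all_boot.
Set Implicit Arguments. Unset Strict Implicit. Unset Printing Implicit Defensive.

Definition tvert (L : nat) := ('I_L * 'I_L)%type.

Definition tadj (L : nat) (u v : tvert L) : bool :=
  ((u.2 == v.2 :> nat) && ((v.1 == (u.1.+1 %% L) :> nat) || (u.1 == (v.1.+1 %% L) :> nat)))
  || ((u.1 == v.1 :> nat) && ((v.2 == (u.2.+1 %% L) :> nat) || (u.2 == (v.2.+1 %% L) :> nat))).

Definition tedges (L : nat) : {set {set tvert L}} :=
  [set [set u; v] | u in [set: tvert L], v in [set w | tadj u w]].

Definition jdeg (L : nat) (J : {set {set tvert L}}) (v : tvert L) : nat :=
  #|[set e in J | v \in e]|.

Definition is_join (L : nat) (D : {set tvert L}) (J : {set {set tvert L}}) : Prop :=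
  J \subset tedges L /\
  forall v : tvert L, odd (jdeg J v) = (v \in D).

Definition color_class (L : nat) (b : bool) : {set tvert L} :=
  [set v : tvert L | odd (v.1 + v.2) == b].

From mathcomp Require Import all_boot zify.
Set Implicit Arguments. Unset Strict Implicit. Unset Printing Implicit Defensive.

(* The row-by-row boustrophedon ("snake") is a Hamiltonian path v_0, ..., v_(N-1), N = L^2,
   of the grid, and since L is even it alternates between the two colour classes.
   Along any Hamiltonian path, the edges v_(t-1) v_t for which the number c t of
   D-vertices among v_0, ..., v_(t-1) is odd form a D-join: v_k lies on at most
   the two path edges with indices k and k+1, so its degree has the parity of
   c k + c (k+1) = 2 c k + [v_k in D] (the missing edges have c 0 = 0 and
   c N = |D| even).  When every other vertex of the path lies in D, the parity of
   c flips on each consecutive pair of indices starting at a D-vertex, so exactly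
   half of the indices are selected. *)

Definition prefix_count (d : pred nat) (t : nat) : nat := \sum_(0 <= u < t) d u.

Lemma prefix_count0 d : prefix_count d 0 = 0.
Proof. by rewrite /prefix_count big_geq. Qed.

Lemma prefix_countS d t : prefix_count d t.+1 = prefix_count d t + d t.
Proof. by rewrite /prefix_count big_nat_recr. Qed.

Lemma odd_prefix_countS d t :
  odd (prefix_count d t.+1) = odd (prefix_count d t) (+) d t.
Proof. by rewrite prefix_countS oddD; case: (d t). Qed.

Lemma sum_nat_pairs (f : nat -> nat) M :
  (forall k, k < M -> f k.*2 + f k.*2.+1 = 1) -> \sum_(0 <= t < M.*2) f t = M.
Proof.
elim: M => [|M IH] f1; first by rewrite big_geq.
rewrite doubleS !big_nat_recr //= IH => [|k ltkM]; last by apply: f1; lia.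
by rewrite -addnA f1 // addn1.
Qed.

Lemma sum_nat_rot (f : nat -> nat) n :
  f 0 = f n -> \sum_(0 <= t < n) f t = \sum_(0 <= t < n) f t.+1.
Proof.
move=> f0n; apply/(@addnI (f 0)).
by rewrite -big_nat_recl // big_nat_recr //= f0n addnC.
Qed.

Lemma sum_odd_prefix_count (d : pred nat) (b : bool) M :
  (forall t, t < M.*2 -> odd t = b -> d t) -> ~~ odd (prefix_count d M.*2) ->
  \sum_(0 <= t < M.*2) odd (prefix_count d t) = M.
Proof.
move=> dA even_dM.
have flip k : k < M.*2 -> odd k = b ->
    odd (prefix_count d k) + odd (prefix_count d k.+1) = 1.
  by move=> ltk kb; rewrite odd_prefix_countS dA //; case: odd.
case: b dA flip => dA flip; last first.
  by apply: sum_nat_pairs => k ltkM; apply: flip; rewrite ?odd_double //; lia.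
rewrite sum_nat_rot; last by rewrite prefix_count0 (negbTE even_dM).
by apply: sum_nat_pairs => k ltkM; apply: flip; rewrite /= ?odd_double //; lia.
Qed.

Lemma sum_nat_eq (P : pred nat) k n : \sum_(0 <= t < n) ((t == k) && P t) = (k < n) && P k.
Proof.
elim: n => [|n IH]; first by rewrite big_geq.
rewrite big_nat_recr //= IH.
case: ltngtP => [ltkn|ltnk|->]; rewrite ?ltnn ?ltnSn ?ltnS ?(ltnW ltkn) /=.
- by rewrite addn0.
- by rewrite leqNgt ltnk.
- by [].
Qed.

Lemma card_ord_pair (P : pred nat) k n :
  #|[set t : 'I_n | P t && ((t == k :> nat) || (t == k.+1 :> nat))]| =
  ((k < n) && P k) + ((k.+1 < n) && P k.+1).
Proof.
rewrite -!sum_nat_eq -big_split big_mkord -sum1_card big_mkcond /=.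
apply: eq_bigr => t _; rewrite inE.
by case: (P t); case: eqVneq => [->|_]; rewrite /= ?andbF ?andbT //= (ltn_eqF (ltnSn k)).
Qed.

Section PathJoin.

Variables (T : finType) (N : nat) (p : nat -> T) (q : T -> nat).
Hypotheses (q_lt : forall v, q v < N) (qK : cancel q p)
           (pK : forall t, t < N -> q (p t) = t).
Variable D : {set T}.

Local Notation c := (prefix_count (fun t => p t \in D)).

(* Index t stands for the path edge p (t-1) p t; t = 0 is never selected, as c 0 = 0. *)
Definition path_join : {set {set T}} :=
  [set [set p t.-1; p t] | t : 'I_N in [set t : 'I_N | odd (c t)]].

Lemma prefix_count_path : c N = #|D|.
Proof.
rewrite /prefix_count big_mkord -sum1_card.
rewrite (reindex (fun t : 'I_N => p t)) /=; last first.
  exists (fun v => Ordinal (q_lt v)) => [t _|v _]; last exact: qK.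
  by apply: val_inj; rewrite /= pK.
by rewrite [RHS]big_mkcond; apply: eq_bigr => t _; case: (p t \in D).
Qed.

Lemma mem_path_step v t : t < N -> (v \in [set p t.-1; p t]) = (q v == t.-1) || (q v == t).
Proof.
move=> ltt; rewrite !inE.
by congr orb; apply/eqP/eqP => [->|<-]; rewrite ?qK // pK //; lia.
Qed.

Lemma path_step_pos (t : 'I_N) : odd (c t) -> 0 < t.
Proof. by case: t => [[|t] ?] //=; rewrite prefix_count0. Qed.

Lemma path_join_edge e : e \in path_join -> exists2 t, t.+1 < N & e = [set p t; p t.+1].
Proof.
case/imsetP=> t; rewrite inE => /path_step_pos t_gt0 ->.
by exists t.-1; rewrite prednK.
Qed.

Lemma path_step_inj :
  {in [set t : 'I_N | odd (c t)] &, injective (fun t : 'I_N => [set p t.-1; p t])}.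
Proof.
move=> t u; rewrite !inE => /path_step_pos t_gt0 /path_step_pos u_gt0 e_tu.
have ltt := ltn_ord t; have ltu := ltn_ord u.
have mem_t : p t \in [set p u.-1; p u] by rewrite -e_tu !inE eqxx orbT.
have mem_t1 : p t.-1 \in [set p u.-1; p u] by rewrite -e_tu !inE eqxx.
rewrite !mem_path_step // !pK // in mem_t mem_t1; last by lia.
by apply: ord_inj; case/orP: mem_t => /eqP; case/orP: mem_t1 => /eqP; lia.
Qed.

Lemma card_path_join : #|path_join| = \sum_(0 <= t < N) odd (c t).
Proof.
rewrite card_in_imset; last exact: path_step_inj.
by rewrite -sum1_card big_mkcond big_mkord; apply: eq_bigr => t _; rewrite inE; case: odd.
Qed.

Lemma path_join_deg v :
  ~~ odd #|D| -> odd #|[set e in path_join | v \in e]| = (v \in D).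
Proof.
move=> D_even; have ltv := q_lt v.
have -> : [set e in path_join | v \in e] =
    (fun t : 'I_N => [set p t.-1; p t]) @:
    [set t : 'I_N | odd (c t) && ((t == q v :> nat) || (t == (q v).+1 :> nat))].
  apply/setP => e; rewrite !inE; apply/andP/imsetP.
  - case=> /imsetP[t]; rewrite inE => odd_ct -> v_t; exists t => //.
    rewrite inE odd_ct; move: v_t; rewrite mem_path_step //.
    by have := path_step_pos odd_ct; lia.
  - case=> t; rewrite inE => /andP[odd_ct v_t] ->; split.
      by apply/imsetP; exists t; rewrite ?inE.
    by rewrite mem_path_step //; move: v_t; have := path_step_pos odd_ct; lia.
rewrite card_in_imset; last first.
  by apply: sub_in2 (path_step_inj) => t; rewrite !inE => /andP[].
rewrite (card_ord_pair (fun t => odd (c t))) ltv /=.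
have -> : ((q v).+1 < N) && odd (c (q v).+1) = odd (c (q v).+1).
  case: ltnP => [//|geN]; have -> : (q v).+1 = N by lia.
  by rewrite prefix_count_path (negbTE D_even).
by rewrite oddD odd_prefix_countS qK; case: (odd (c _)); case: (v \in D).
Qed.

End PathJoin.

Section Snake.

Variable n : nat.
Local Notation L := n.+1.

Definition snake_col (i x : nat) : nat := if odd i then n - x else x.

Definition snake (t : nat) : tvert L :=
  (inord (t %/ L), inord (snake_col (t %/ L) (t %% L))).

Definition snake_pos (v : tvert L) : nat := v.1 * L + snake_col v.1 v.2.

Lemma snake_col_lt i x : x < L -> snake_col i x < L.
Proof. by rewrite /snake_col; case: odd; lia. Qed.

Lemma snake_colK i x : x < L -> snake_col i (snake_col i x) = x.
Proof. by rewrite /snake_col; case: odd; lia. Qed.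

Lemma snake_coord i x : i < L -> x < L ->
  (snake (i * L + x)).1 = i :> nat /\ (snake (i * L + x)).2 = snake_col i x :> nat.
Proof.
move=> lti ltx; rewrite /snake /= divnMDl // modnMDl divn_small // modn_small //.
by rewrite addn0 !inordK // snake_col_lt.
Qed.

Lemma snake_decomp t : t < L * L -> exists i x, [/\ i < L, x < L & t = i * L + x].
Proof.
move=> ltt; exists (t %/ L), (t %% L); split; last exact: divn_eq.
  by rewrite ltn_divLR.
by rewrite ltn_mod.
Qed.

Lemma snake_pos_lt v : snake_pos v < L * L.
Proof.
case: v => i j; rewrite /snake_pos /=.
have := ltn_ord i; have := snake_col_lt i (ltn_ord j); nia.
Qed.

Lemma snake_posK : cancel snake_pos snake.
Proof.
case=> i j; rewrite /snake_pos /=.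
have [Ei Ej] := snake_coord (ltn_ord i) (snake_col_lt i (ltn_ord j)).
by apply/pair_equal_spec; split; apply: val_inj; rewrite //= Ej snake_colK.
Qed.

Lemma snakeK t : t < L * L -> snake_pos (snake t) = t.
Proof.
case/snake_decomp=> i [x [lti ltx ->]]; have [Ei Ej] := snake_coord lti ltx.
by rewrite /snake_pos Ei Ej snake_colK.
Qed.

Lemma odd_snake t : odd n -> t < L * L -> odd ((snake t).1 + (snake t).2) = odd t.
Proof.
move=> odd_n /snake_decomp[i [x [lti ltx ->]]]; have [-> ->] := snake_coord lti ltx.
rewrite /snake_col !oddD oddM /= odd_n andbF /=.
by case: ifP => // _; rewrite oddB ?odd_n; [case: odd | lia].
Qed.

Lemma snake_adj t : t.+1 < L * L -> tadj (snake t) (snake t.+1).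
Proof.
move=> ltt1; have /snake_decomp[i [x [lti ltx Et]]] : t < L * L by lia.
have [Ei Ex] := snake_coord lti ltx; rewrite /tadj Et Ei Ex -addnS.
have [ltxn|Exn] : x < n \/ x = n by lia.
- have ltx1 : x.+1 < L by lia.
  have [-> ->] := snake_coord lti ltx1.
  rewrite eqxx /= /snake_col; case: odd.
  + have -> : (n - x.+1).+1 = n - x by lia.
    by rewrite (@modn_small (n - x)) ?eqxx ?orbT //; lia.
  + by rewrite (@modn_small x.+1) // eqxx orbT.
- subst x; have lti1 : i.+1 < L by rewrite -(ltn_pmul2r (ltn0Sn n)) mulSnr addnS -Et.
  have -> : i * L + n.+1 = i.+1 * L + 0 by rewrite addn0 mulSnr.
  have [-> ->] := snake_coord lti1 (ltn0Sn n).
  rewrite /snake_col /= modn_small // eqxx /=.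
  by case: odd; rewrite ?subn0 ?subnn eqxx.
Qed.

End Snake.

Theorem lemmaA9 (L : nat) (b : bool) (D : {set tvert L}) :
  4 <= L -> ~~ odd L ->
  ~~ odd #|D| ->
  color_class L b \subset D ->
  exists J : {set {set tvert L}}, is_join D J /\ #|J| = (L * L) %/ 2.
Proof.
case: L D => [//|n] D _ L_even D_even color_sub.
have odd_n : odd n by move: L_even; rewrite /= negbK.
have q_lt := @snake_pos_lt n; have qK := @snake_posK n; have pK := @snakeK n.
have snake_D t : t < n.+1 * n.+1 -> odd t = b -> snake n t \in D.
  by move=> ltt tb; apply: (subsetP color_sub); rewrite inE odd_snake // tb.
exists (path_join (n.+1 * n.+1) (snake n) D); split; first split.
- apply/subsetP => e /path_join_edge[t ltt ->].
  by apply/imset2P; exists (snake n t) (snake n t.+1); rewrite ?inE ?snake_adj.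
- by move=> v; have := path_join_deg q_lt qK pK v D_even.
have halfK : ((n.+1 * n.+1)./2).*2 = n.+1 * n.+1.
  by rewrite -[RHS]odd_double_half oddM (negbTE L_even).
rewrite (card_path_join qK pK) divn2 -[in LHS]halfK.
apply: (sum_odd_prefix_count (b := b)) => [t|]; rewrite halfK; first exact: snake_D.
by rewrite (prefix_count_path q_lt qK pK).
Qed.
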